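(* Let $M$ be a locally finite uniformly discrete metric space which admits a quasi-isometric embedding into an infinite-dimensional Banach space $X$. Then $M$ admits a bilipschitz embedding into $X$.
   Context: A metric space is locally finite if every ball of finite radius has finite cardinality; it is uniformly discrete if $\inf\{d(u,v):u\ne v\}>0$. A map $f:(A,d_A)\to(B,d_B)$ is a quasi-isometric embedding if there are $a_1,a_2>0$, $b\ge 0$ with $a_1d_A(u,v)-b\le d_B(f(u),f(v))\le a_2d_A(u,v)+b$ for all $u,v\in A$. A bilipschitz embedding is a map with $c\,d_A(u,v)\le d_B(f(u),f(v))\le C\,d_A(u,v)$ for constants $0<c\le C<\infty$. *)

From Stdlib Require Import Reals List.
Open Scope R_scope.

Record MetricSpace := {
  mpt :> Type;
  mdist : mpt -> mpt -> R;
  mdist_nonneg : forall x y, 0 <= mdist x y;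
  mdist_eq0 : forall x y, mdist x y = 0 <-> x = y;
  mdist_sym : forall x y, mdist x y = mdist y x;
  mdist_tri : forall x y z, mdist x z <= mdist x y + mdist y z
}.

Definition locally_finite (M : MetricSpace) : Prop :=
  forall (x : M) (r : R), exists l : list M,
    forall y : M, mdist M x y <= r -> In y l.

Definition uniformly_discrete (M : MetricSpace) : Prop :=
  exists eps : R, 0 < eps /\ forall u v : M, u <> v -> eps <= mdist M u v.

Record NormedSpace := {
  vpt :> Type;
  vzero : vpt;
  vadd : vpt -> vpt -> vpt;
  vopp : vpt -> vpt;
  vscal : R -> vpt -> vpt;
  vnorm : vpt -> R;
  vadd_assoc : forall x y z, vadd x (vadd y z) = vadd (vadd x y) z;
  vadd_comm : forall x y, vadd x y = vadd y x;
  vadd_0 : forall x, vadd x vzero = x;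
  vadd_opp : forall x, vadd x (vopp x) = vzero;
  vscal_1 : forall x, vscal 1 x = x;
  vscal_assoc : forall a b x, vscal a (vscal b x) = vscal (a * b) x;
  vscal_distr_v : forall a x y, vscal a (vadd x y) = vadd (vscal a x) (vscal a y);
  vscal_distr_s : forall a b x, vscal (a + b) x = vadd (vscal a x) (vscal b x);
  vnorm_eq0 : forall x, vnorm x = 0 -> x = vzero;
  vnorm_scal : forall a x, vnorm (vscal a x) = Rabs a * vnorm x;
  vnorm_tri : forall x y, vnorm (vadd x y) <= vnorm x + vnorm y
}.

Definition vdist (X : NormedSpace) (x y : X) : R := vnorm X (vadd X x (vopp X y)).

Definition complete (X : NormedSpace) : Prop :=
  forall u : nat -> X,
    (forall eps, 0 < eps -> exists N, forall n m, (n >= N)%nat -> (m >= N)%nat ->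
        vdist X (u n) (u m) < eps) ->
    exists l : X, forall eps, 0 < eps -> exists N, forall n, (n >= N)%nat ->
        vdist X (u n) l < eps.

Definition Banach (X : NormedSpace) : Prop := complete X.

Fixpoint lin_comb (X : NormedSpace) (c : nat -> R) (v : nat -> X) (n : nat) : X :=
  match n with
  | O => vzero X
  | S k => vadd X (lin_comb X c v k) (vscal X (c k) (v k))
  end.

Definition lin_indep (X : NormedSpace) (v : nat -> X) (n : nat) : Prop :=
  forall c : nat -> R, lin_comb X c v n = vzero X -> forall i, (i < n)%nat -> c i = 0.

Definition infinite_dimensional (X : NormedSpace) : Prop :=
  forall n : nat, exists v : nat -> X, lin_indep X v n.

Definition quasi_isometric_embedding (M : MetricSpace) (X : NormedSpace) (f : M -> X) : Prop :=
  exists a1 a2 b : R, 0 < a1 /\ 0 < a2 /\ 0 <= b /\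
    forall u v : M,
      a1 * mdist M u v - b <= vdist X (f u) (f v) /\
      vdist X (f u) (f v) <= a2 * mdist M u v + b.

Definition bilipschitz_embedding (M : MetricSpace) (X : NormedSpace) (f : M -> X) : Prop :=
  exists c C : R, 0 < c /\ c <= C /\
    forall u v : M,
      c * mdist M u v <= vdist X (f u) (f v) /\
      vdist X (f u) (f v) <= C * mdist M u v.

From Stdlib Require Import Reals List Lra Lia Classical ClassicalEpsilon Wf_nat Cantor.
Open Scope R_scope.

(* Let f be a quasi-isometric embedding of M into X.  Since M
   is locally finite it is countable; enumerate it as m 0, m 1, ....  In an
   infinite-dimensional normed space, Riesz's lemma yields, for any finite list
   L, a vector of norm at most 1 at distance at least 1/2 from span L.  Choosing
   greedily e k far from the span of f (m 0), ..., f (m k), e 0, ..., e (k-1),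
   the map g (m k) = f (m k) + e k is 1/2-separated and within distance 2 of f.
   Such a bounded perturbation of a quasi-isometric embedding of a uniformly
   discrete space is bilipschitz: small distances are controlled by the
   separation, large ones by the coarse bounds. *)

Arguments vzero {_}. Arguments vadd {_} _ _. Arguments vopp {_} _.
Arguments vscal {_} _ _. Arguments vnorm {_} _.

Section VectorAlgebra.
Context {X : NormedSpace}.
Implicit Types (u x y z w : X) (a b c : R).

Lemma vadd_0_l x : vadd vzero x = x.
Proof. rewrite vadd_comm; apply vadd_0. Qed.

Lemma vadd_cancel_l u x y : vadd u x = vadd u y -> x = y.
Proof.
  intro H. rewrite <- (vadd_0_l x), <- (vadd_0_l y), <- (vadd_opp _ u), (vadd_comm _ u).
  rewrite <- !vadd_assoc, H. reflexivity.
Qed.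

Lemma vscal_0_l x : vscal 0 x = vzero.
Proof.
  apply (vadd_cancel_l (vscal 0 x)).
  rewrite vadd_0, <- vscal_distr_s, Rplus_0_l. reflexivity.
Qed.

Lemma vscal_0_r a : vscal a (@vzero X) = vzero.
Proof. rewrite <- (vscal_0_l vzero), vscal_assoc, Rmult_0_r. reflexivity. Qed.

Lemma vopp_scal x : vopp x = vscal (-1) x.
Proof.
  apply (vadd_cancel_l x). rewrite vadd_opp.
  rewrite <- (vscal_1 _ x) at 1. rewrite <- vscal_distr_s.
  replace (1 + -1) with 0 by ring. rewrite vscal_0_l; reflexivity.
Qed.

Lemma vadd_shuffle x y z w : vadd (vadd x y) (vadd z w) = vadd (vadd x z) (vadd y w).
Proof.
  rewrite !vadd_assoc. f_equal. rewrite <- !vadd_assoc. f_equal. apply vadd_comm.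
Qed.

(* Subtraction, written through scaling by -1 so that identities reduce to
   the module axioms. *)
Definition vsub x y : X := vadd x (vscal (-1) y).

Lemma vdist_vsub x y : vdist X x y = vnorm (vsub x y).
Proof. unfold vdist, vsub. rewrite vopp_scal. reflexivity. Qed.

Lemma vsub_0 x : vsub x vzero = x.
Proof. unfold vsub. rewrite vscal_0_r, vadd_0; reflexivity. Qed.

Lemma vsub_self x : vsub x x = vzero.
Proof. unfold vsub. rewrite <- vopp_scal. apply vadd_opp. Qed.

Lemma vsub_addK x y : vadd (vsub x y) y = x.
Proof.
  unfold vsub. rewrite <- vadd_assoc, (vadd_comm _ _ y), <- vopp_scal, vadd_opp.
  apply vadd_0.
Qed.

Lemma vsub_swap x y : vsub y x = vscal (-1) (vsub x y).
Proof.
  unfold vsub. rewrite vscal_distr_v, vscal_assoc, (vadd_comm _ y).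
  replace (-1 * -1) with 1 by ring. rewrite vscal_1; reflexivity.
Qed.

Lemma vsub_add_add x y z w : vsub (vadd x y) (vadd z w) = vadd (vsub x z) (vsub y w).
Proof. unfold vsub. rewrite vscal_distr_v. apply vadd_shuffle. Qed.

Lemma vsub_add_r x y z : vsub x (vadd y z) = vsub (vsub x z) y.
Proof. unfold vsub. rewrite vscal_distr_v, <- !vadd_assoc. f_equal. apply vadd_comm. Qed.

Lemma vsub_scal_scal x w a b : vsub (vsub x (vscal a w)) (vsub x (vscal b w)) = vscal (b - a) w.
Proof.
  unfold vsub.
  rewrite vscal_distr_v, !vscal_assoc, vadd_shuffle, <- vopp_scal, vadd_opp, vadd_0_l,
    <- vscal_distr_s.
  f_equal. ring.
Qed.

Lemma vsub_eliminate z1 z2 w a c1 c2 :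
  vsub (vadd z1 (vscal c1 w)) (vscal a (vadd z2 (vscal c2 w))) =
  vadd (vsub z1 (vscal a z2)) (vscal (c1 - a * c2) w).
Proof.
  unfold vsub. rewrite !vscal_distr_v, !vscal_assoc, vadd_shuffle, <- vscal_distr_s.
  f_equal. f_equal. ring.
Qed.

(* Factoring out the coefficient of w (used to bound |y + c w| from below). *)
Lemma vadd_factor y w c : c <> 0 -> vadd y (vscal c w) = vscal c (vsub w (vscal (- / c) y)).
Proof.
  intro Hc. unfold vsub. rewrite vscal_distr_v, !vscal_assoc, vadd_comm.
  replace (c * -1 * - / c) with 1 by (field; auto). rewrite vscal_1; reflexivity.
Qed.

Lemma vsub_normalize x y z r : r <> 0 ->
  vsub (vscal (/ r) (vsub x y)) z = vscal (/ r) (vsub x (vadd y (vscal r z))).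
Proof.
  intro Hr. unfold vsub.
  rewrite !vscal_distr_v, !vscal_assoc, <- !vadd_assoc. do 3 f_equal. field; auto.
Qed.

Lemma vsub_perturbed x y u w : vsub (vadd x u) (vadd y w) = vsub u (vsub (vadd y w) x).
Proof.
  unfold vsub. rewrite !vscal_distr_v, !vscal_assoc.
  replace (-1 * -1) with 1 by ring. rewrite vscal_1.
  rewrite (vadd_comm _ _ x), (vadd_assoc _ u x), (vadd_comm _ u x). reflexivity.
Qed.

Lemma vnorm_0 : vnorm (@vzero X) = 0.
Proof. rewrite <- (vscal_0_l vzero), vnorm_scal, Rabs_R0. ring. Qed.

Lemma vnorm_neg x : vnorm (vscal (-1) x) = vnorm x.
Proof. rewrite vnorm_scal. unfold Rabs; destruct Rcase_abs; lra. Qed.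

Lemma vnorm_nonneg x : 0 <= vnorm x.
Proof.
  pose proof (vnorm_tri _ x (vscal (-1) x)) as H.
  rewrite vnorm_neg, <- vopp_scal, vadd_opp, vnorm_0 in H. lra.
Qed.

Lemma vnorm_pos x : x <> vzero -> 0 < vnorm x.
Proof.
  intro H. destruct (vnorm_nonneg x) as [h|h]; auto.
  exfalso; apply H, vnorm_eq0; auto.
Qed.

Lemma vnorm_vsub_sym x y : vnorm (vsub x y) = vnorm (vsub y x).
Proof. rewrite (vsub_swap x y), vnorm_neg. reflexivity. Qed.

Lemma vsub_chain x y z : vadd (vsub x y) (vsub y z) = vsub x z.
Proof.
  unfold vsub. rewrite <- vadd_assoc. f_equal.
  rewrite vadd_assoc, (vadd_comm _ _ y), <- vopp_scal, vadd_opp. apply vadd_0_l.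
Qed.

Lemma vnorm_tri_vsub x y z : vnorm (vsub x z) <= vnorm (vsub x y) + vnorm (vsub y z).
Proof. rewrite <- (vsub_chain x y z). apply vnorm_tri. Qed.

Lemma vaddK x y : vsub (vadd x y) y = x.
Proof. unfold vsub. rewrite <- vadd_assoc, <- vopp_scal, vadd_opp. apply vadd_0. Qed.

Lemma vnorm_tri_rev x y : vnorm x <= vnorm (vadd x y) + vnorm y.
Proof.
  rewrite <- (vnorm_neg y). rewrite <- (vaddK x y) at 1. apply vnorm_tri.
Qed.

End VectorAlgebra.

Section Span.
Context {X : NormedSpace}.
Implicit Types (x y : X) (L : list X) (v : nat -> X).

Fixpoint span L y : Prop :=
  match L with
  | nil => y = vzero
  | w :: L' => exists c z, span L' z /\ y = vadd z (vscal c w)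
  end.

Lemma span_0 L : span L vzero.
Proof.
  induction L as [|w L IH]; simpl; auto.
  exists 0, vzero. split; auto. rewrite vscal_0_l, vadd_0; reflexivity.
Qed.

Lemma span_add L x y : span L x -> span L y -> span L (vadd x y).
Proof.
  revert x y; induction L as [|w L IH]; simpl.
  - intros x y -> ->; rewrite vadd_0; reflexivity.
  - intros x y (c1 & z1 & H1 & ->) (c2 & z2 & H2 & ->).
    exists (c1 + c2), (vadd z1 z2). split; [apply IH; auto|].
    rewrite vadd_shuffle, vscal_distr_s; reflexivity.
Qed.

Lemma span_scal L a x : span L x -> span L (vscal a x).
Proof.
  revert x; induction L as [|w L IH]; simpl.
  - intros x ->; rewrite vscal_0_r; reflexivity.
  - intros x (c & z & Hz & ->). exists (a * c), (vscal a z).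
    split; [apply IH; auto|]. rewrite vscal_distr_v, vscal_assoc; reflexivity.
Qed.

Lemma span_sub L x y : span L x -> span L y -> span L (vsub x y).
Proof. intros; apply span_add; auto; apply span_scal; auto. Qed.

Lemma span_In L x : In x L -> span L x.
Proof.
  induction L as [|w L IH]; simpl; [tauto|].
  intros [<-|H].
  - exists 1, vzero. split; [apply span_0|]. rewrite vadd_0_l, vscal_1; reflexivity.
  - exists 0, x. split; auto. rewrite vscal_0_l, vadd_0; reflexivity.
Qed.

Lemma span_mono L1 L2 : (forall x, In x L1 -> span L2 x) -> forall y, span L1 y -> span L2 y.
Proof.
  induction L1 as [|w L IH]; simpl; intros H y Hy.
  - subst; apply span_0.
  - destruct Hy as (c & z & Hz & ->). apply span_add; [apply IH; auto|apply span_scal; auto].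
Qed.

Fixpoint pre v i : list X :=
  match i with O => nil | S i' => v i' :: pre v i' end.

Lemma In_pre v i j : (j < i)%nat -> In (v j) (pre v i).
Proof.
  induction i; simpl; intros; [lia|].
  destruct (Nat.eq_dec j i); [subst; auto | right; apply IHi; lia].
Qed.

Lemma pre_In v i y : In y (pre v i) -> exists j, (j < i)%nat /\ y = v j.
Proof.
  induction i; simpl; [tauto|]. intros [<-|H].
  - exists i; split; auto; lia.
  - destruct (IHi H) as (j & ? & ?); exists j; split; auto; lia.
Qed.

Lemma pre_ext v v' i : (forall j, (j < i)%nat -> v' j = v j) -> pre v' i = pre v i.
Proof. induction i; simpl; intros H; auto. rewrite H, IHi; auto. Qed.

End Span.

(* The Steinitz exchange lemma, proved by Gaussian elimination. *)
Section Exchange.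
Context {X : NormedSpace}.
Implicit Types (L : list X) (v : nat -> X).

Definition eliminate v (r : nat -> R) (k i : nat) : X :=
  if (i <? k)%nat then v i else vsub (v (S i)) (vscal (r (S i)) (v k)).

Lemma eliminate_in_span L w v (z : nat -> X) (c : nat -> R) k n :
  (forall i, (i <= S n)%nat -> span L (z i) /\ v i = vadd (z i) (vscal (c i) w)) ->
  (k <= S n)%nat -> c k <> 0 -> (forall j, (j < k)%nat -> c j = 0) ->
  forall i, (i <= n)%nat -> span L (eliminate v (fun j => c j / c k) k i).
Proof.
  intros Hdec Hk Hck Hc0 i Hi. unfold eliminate.
  destruct (Nat.ltb_spec i k).
  - destruct (Hdec i) as [Hz ->]; [lia|]. rewrite Hc0, vscal_0_l, vadd_0 by lia. exact Hz.
  - destruct (Hdec (S i)) as [Hz ->]; [lia|]. destruct (Hdec k) as [Hzk ->]; [lia|].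
    rewrite vsub_eliminate.
    replace (c (S i) - c (S i) / c k * c k) with 0 by (field; auto).
    rewrite vscal_0_l, vadd_0. apply span_sub; auto. apply span_scal; auto.
Qed.

Lemma eliminate_dependence v r k i :
  span (pre (eliminate v r k) i) (eliminate v r k i) ->
  exists j, (j <= S i)%nat /\ span (pre v j) (v j).
Proof.
  intro Hsp. destruct (Nat.ltb_spec i k) as [hik|hik].
  - exists i. split; [lia|].
    rewrite (pre_ext v) in Hsp.
    + unfold eliminate in Hsp. rewrite (proj2 (Nat.ltb_lt i k) hik) in Hsp. exact Hsp.
    + intros j Hj. unfold eliminate. rewrite (proj2 (Nat.ltb_lt j k)); auto; lia.
  - exists (S i). split; [lia|].
    assert (Hpre : forall y, span (pre (eliminate v r k) i) y -> span (pre v (S i)) y).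
    { apply span_mono. intros x Hx. destruct (pre_In _ _ _ Hx) as (j & Hj & ->).
      unfold eliminate. destruct (Nat.ltb_spec j k).
      - apply span_In, In_pre; lia.
      - apply span_sub; [apply span_In, In_pre; lia|].
        apply span_scal, span_In, In_pre; lia. }
    apply Hpre in Hsp. unfold eliminate in Hsp.
    rewrite (proj2 (Nat.ltb_ge i k) hik) in Hsp.
    rewrite <- (vsub_addK (v (S i)) (vscal (r (S i)) (v k))).
    apply span_add; auto. apply span_scal, span_In, In_pre; lia.
Qed.

Lemma exchange L v :
  (forall i, (i <= length L)%nat -> span L (v i)) ->
  exists i, (i <= length L)%nat /\ span (pre v i) (v i).
Proof.
  revert v; induction L as [|w L IH]; simpl; intros v Hv.
  { exists O; split; auto. apply Hv; auto. }
  set (n := length L) in *.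
  destruct (choice (fun i (p : R * X) =>
      (i <= S n)%nat -> span L (snd p) /\ v i = vadd (snd p) (vscal (fst p) w)))
    as [p Hdec].
  { intro i. destruct (Compare_dec.le_dec i (S n)) as [h|h].
    - destruct (Hv i h) as (c & z & ? & ?). exists (c, z); auto.
    - exists (0, vzero); intro; lia. }
  destruct (classic (exists k, (k <= S n)%nat /\ fst (p k) <> 0)) as [Hpiv|Hnopiv].
  - destruct (dec_inh_nat_subset_has_unique_least_element _ (fun k => classic _) Hpiv)
      as (k & ((Hk & Hck) & Hmin) & _).
    assert (Hc0 : forall j, (j < k)%nat -> fst (p j) = 0).
    { intros j Hj. apply NNPP; intro Hcj.
      assert (k <= j)%nat by (apply Hmin; split; auto; lia). lia. }
    destruct (IH (eliminate v (fun j => fst (p j) / fst (p k)) k)) as (i & Hi & Hsp).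
    { exact (eliminate_in_span L w v (fun i => snd (p i)) (fun i => fst (p i)) k n
               Hdec Hk Hck Hc0). }
    destruct (eliminate_dependence _ _ _ _ Hsp) as (j & Hj & Hdep).
    exists j; split; auto; lia.
  - destruct (IH v) as (i & Hi & Hsp).
    { intros i Hi. destruct (Hdec i) as [Hz ->]; [lia|].
      replace (fst (p i)) with 0 by (apply NNPP; intro; apply Hnopiv; exists i; split; auto; lia).
      rewrite vscal_0_l, vadd_0; exact Hz. }
    exists i; split; auto.
Qed.
End Exchange.

Section OutsideSpan.
Context {X : NormedSpace}.
Implicit Types (L : list X) (v : nat -> X).

Lemma lin_comb_ext (c d : nat -> R) v n :
  (forall j, (j < n)%nat -> c j = d j) -> lin_comb X c v n = lin_comb X d v n.
Proof. induction n; simpl; intros H; auto. rewrite IHn, H; auto. Qed.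

Lemma lin_comb_tail (c : nat -> R) v n m :
  (forall j, (n <= j)%nat -> c j = 0) -> (n <= m)%nat -> lin_comb X c v m = lin_comb X c v n.
Proof.
  intros H. induction m; intros Hm.
  - replace n with O by lia; reflexivity.
  - destruct (Nat.eq_dec n (S m)) as [->|Hne]; auto.
    simpl. rewrite IHm, H by lia. rewrite vscal_0_l, vadd_0; reflexivity.
Qed.

Lemma span_pre_lin_comb v i y : span (pre v i) y -> exists d, y = lin_comb X d v i.
Proof.
  revert y; induction i; simpl; intros y Hy.
  - exists (fun _ => 0); auto.
  - destruct Hy as (c & z & Hz & ->). destruct (IHi z Hz) as [d ->].
    exists (fun j => if Nat.eq_dec j i then c else d j). f_equal.
    + apply lin_comb_ext. intros j Hj. destruct (Nat.eq_dec j i); auto; lia.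
    + destruct (Nat.eq_dec i i); auto; congruence.
Qed.

Lemma lin_indep_not_in_pre v m i : lin_indep X v m -> (i < m)%nat -> ~ span (pre v i) (v i).
Proof.
  intros Hind Him Hs. destruct (span_pre_lin_comb v i _ Hs) as [d Hd].
  set (c := fun j => if (j <? i)%nat then d j else if Nat.eq_dec j i then -1 else 0).
  assert (Hci : c i = -1).
  { unfold c. rewrite (proj2 (Nat.ltb_ge i i)) by lia. destruct (Nat.eq_dec i i); congruence. }
  assert (Hrel : lin_comb X c v m = vzero).
  { rewrite (lin_comb_tail c v (S i) m).
    - simpl. rewrite (lin_comb_ext c d), Hci, <- Hd, <- vopp_scal; [apply vadd_opp|].
      intros j Hj. unfold c. rewrite (proj2 (Nat.ltb_lt j i)); auto.
    - intros j Hj. unfold c. rewrite (proj2 (Nat.ltb_ge j i)) by lia.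
      destruct (Nat.eq_dec j i); auto; lia.
    - lia. }
  pose proof (Hind c Hrel i Him). lra.
Qed.

Lemma exists_outside_span L : infinite_dimensional X -> exists x, ~ span L x.
Proof.
  intros Hinf. destruct (Hinf (S (length L))) as [v Hv].
  apply NNPP; intro Hall.
  destruct (exchange L v) as (i & Hi & Hs).
  - intros i _. apply NNPP; intro H. apply Hall; exists (v i); auto.
  - apply (lin_indep_not_in_pre v (S (length L)) i); auto; lia.
Qed.
End OutsideSpan.

Section DistanceToSpan.
Context {X : NormedSpace}.
Implicit Types (x y z w g : X) (L : list X).

Definition dist_lb L z (r : R) : Prop := forall y, span L y -> r <= vnorm (vsub z y).

Lemma dist_lb_bound L z : bound (dist_lb L z).
Proof. exists (vnorm (vsub z vzero)). intros r Hr. apply Hr, span_0. Qed.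

Lemma dist_lb_inhabited L z : exists r, dist_lb L z r.
Proof. exists 0. intros y _. apply vnorm_nonneg. Qed.

Definition dist_span L z : R :=
  proj1_sig (completeness (dist_lb L z) (dist_lb_bound L z) (dist_lb_inhabited L z)).

Lemma dist_span_lub L z : is_lub (dist_lb L z) (dist_span L z).
Proof. unfold dist_span. destruct completeness; auto. Qed.

Lemma dist_span_le L z y : span L y -> dist_span L z <= vnorm (vsub z y).
Proof. intro Hy. apply (proj2 (dist_span_lub L z)). intros r Hr. apply Hr; auto. Qed.

Lemma dist_span_ge L z r : dist_lb L z r -> r <= dist_span L z.
Proof. intro H. apply (proj1 (dist_span_lub L z)); auto. Qed.

Lemma dist_span_lipschitz L z z' : dist_span L z <= dist_span L z' + vnorm (vsub z z').
Proof.
  cut (dist_span L z - vnorm (vsub z z') <= dist_span L z'). { lra. }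
  apply dist_span_ge. intros y Hy.
  pose proof (dist_span_le L z y Hy). pose proof (vnorm_tri_vsub z z' y). lra.
Qed.

Lemma dist_span_approx L z : 0 < dist_span L z ->
  exists y, span L y /\ vnorm (vsub z y) < 2 * dist_span L z.
Proof.
  intro Hp. apply NNPP; intro Hn.
  assert (2 * dist_span L z <= dist_span L z); [|lra].
  apply dist_span_ge. intros y Hy. apply Rnot_lt_le. intro; apply Hn; eauto.
Qed.

Lemma dist_span_line_continuous L x w c :
  continuity_pt (fun c => dist_span L (vsub x (vscal c w))) c.
Proof.
  unfold continuity_pt, continue_in, limit1_in, limit_in. intros eps Heps.
  pose proof (vnorm_nonneg w) as Hw.
  exists (eps / (vnorm w + 1)). split; [apply Rdiv_lt_0_compat; lra|].
  intros c' [_ Hd]. simpl in *. unfold R_dist in *.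
  pose proof (dist_span_lipschitz L (vsub x (vscal c' w)) (vsub x (vscal c w))) as H1.
  pose proof (dist_span_lipschitz L (vsub x (vscal c w)) (vsub x (vscal c' w))) as H2.
  rewrite vsub_scal_scal, vnorm_scal in H1, H2.
  rewrite <- Rabs_Ropp, Ropp_minus_distr in H1.
  assert (Rabs (c' - c) * vnorm w < eps).
  { apply Rle_lt_trans with (Rabs (c' - c) * (vnorm w + 1)).
    - apply Rmult_le_compat_l; [apply Rabs_pos|lra].
    - apply (Rmult_lt_compat_r (vnorm w + 1)) in Hd; [|lra].
      unfold Rdiv in Hd. rewrite Rmult_assoc, Rinv_l in Hd; lra. }
  apply Rabs_def1; lra.
Qed.

Lemma large_coefficient L g w c : span L g ->
  Rabs c * dist_span L w <= vnorm (vadd g (vscal c w)).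
Proof.
  intro Hg. destruct (Req_dec c 0) as [->|Hc].
  - rewrite Rabs_R0, Rmult_0_l. apply vnorm_nonneg.
  - rewrite (vadd_factor g w c Hc), vnorm_scal.
    apply Rmult_le_compat_l; [apply Rabs_pos|]. apply dist_span_le, span_scal; auto.
Qed.

(* Bounded coefficients c are handled by
   compactness of [-K, K], large ones by [large_coefficient]. *)
Lemma dist_span_cons_pos L w x :
  0 < dist_span L w -> (forall c, 0 < dist_span L (vsub x (vscal c w))) -> 0 < vnorm x ->
  0 < dist_span (w :: L) x.
Proof.
  intros Hdw Hline Hx0.
  set (h := fun c => dist_span L (vsub x (vscal c w))).
  set (K := 2 * vnorm x / dist_span L w).
  assert (HK : 0 <= K) by (apply Rlt_le, Rdiv_lt_0_compat; lra).
  destruct (continuity_ab_min h (-K) K) as (cmin & Hmin & _).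
  { lra. }
  { intros; apply dist_span_line_continuous. }
  apply Rlt_le_trans with (Rmin (h cmin) (vnorm x)); [apply Rmin_glb_lt; [apply Hline|exact Hx0]|].
  apply dist_span_ge. intros y (c & g & Hg & ->).
  destruct (Rle_dec (Rabs c) K) as [hc|hc].
  - apply Rle_trans with (h cmin); [apply Rmin_l|].
    apply Rle_trans with (h c).
    + apply Hmin. pose proof (Rle_abs c). pose proof (Rle_abs (- c)).
      rewrite Rabs_Ropp in *. lra.
    + unfold h. rewrite vsub_add_r. apply dist_span_le; auto.
  - apply Rle_trans with (vnorm x); [apply Rmin_r|].
    pose proof (large_coefficient L g w c Hg) as Hlarge.
    assert (2 * vnorm x < Rabs c * dist_span L w).
    { apply Rnot_le_lt in hc. unfold K in hc.
      apply (Rmult_lt_compat_r (dist_span L w)) in hc; auto.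
      unfold Rdiv in hc. rewrite Rmult_assoc, Rinv_l in hc; lra. }
    pose proof (vnorm_tri_vsub (vadd g (vscal c w)) x vzero) as Ht.
    rewrite !vsub_0, vnorm_vsub_sym in Ht. lra.
Qed.

Lemma dist_span_pos L x : ~ span L x -> 0 < dist_span L x.
Proof.
  revert x; induction L as [|w L IH]; intros x Hx.
  { apply Rlt_le_trans with (vnorm x).
    - apply vnorm_pos. exact Hx.
    - apply dist_span_ge. intros y Hy; simpl in Hy; subst. rewrite vsub_0; lra. }
  destruct (classic (span L w)) as [Hw|Hw].
  - (* w is redundant: span (w :: L) = span L. *)
    assert (Hx' : ~ span L x).
    { intro H. apply Hx. exists 0, x. split; auto. rewrite vscal_0_l, vadd_0; reflexivity. }
    apply Rlt_le_trans with (dist_span L x); [apply IH; auto|].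
    apply dist_span_ge. intros y (c & z & Hz & ->).
    apply dist_span_le, span_add; auto. apply span_scal; auto.
  - apply dist_span_cons_pos; auto.
    + intro c. apply IH. intro H. apply Hx.
      exists c, (vsub x (vscal c w)). split; auto. symmetry; apply vsub_addK.
    + apply vnorm_pos. intros ->. apply Hx, span_0.
Qed.

Lemma riesz L : infinite_dimensional X ->
  exists e, vnorm e <= 1 /\ forall y, span L y -> / 2 <= vnorm (vsub e y).
Proof.
  intro Hinf. destruct (exists_outside_span L Hinf) as [x Hx].
  pose proof (dist_span_pos L x Hx) as Hd.
  destruct (dist_span_approx L x Hd) as (y0 & Hy0 & Hnear).
  set (r := vnorm (vsub x y0)) in *.
  assert (Hr : 0 < r) by (apply Rlt_le_trans with (dist_span L x); auto; apply dist_span_le; auto).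
  assert (Hinvr : 0 <= / r) by (apply Rlt_le, Rinv_0_lt_compat; auto).
  exists (vscal (/ r) (vsub x y0)). split.
  - rewrite vnorm_scal, Rabs_pos_eq by auto. fold r. right; field; lra.
  - intros y Hy. rewrite vsub_normalize, vnorm_scal, Rabs_pos_eq by lra.
    assert (dist_span L x <= vnorm (vsub x (vadd y0 (vscal r y)))).
    { apply dist_span_le, span_add; auto. apply span_scal; auto. }
    apply Rmult_le_reg_l with (2 * r); [lra|].
    replace (2 * r * (/ r * vnorm (vsub x (vadd y0 (vscal r y)))))
      with (2 * vnorm (vsub x (vadd y0 (vscal r y)))) by (field; lra).
    replace (2 * r * / 2) with r by field. lra.
Qed.
End DistanceToSpan.

Section SeparatedPerturbation.
Context {X : NormedSpace}.
Variable avoid : list X -> X.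
Variable a : nat -> X.

Fixpoint chosen (k : nat) : list X :=
  match k with
  | O => nil
  | S k' => avoid (pre a k ++ chosen k') :: chosen k'
  end.

Definition perturbation (k : nat) : X := avoid (pre a (S k) ++ chosen k).

Lemma In_chosen j k : (j < k)%nat -> In (perturbation j) (chosen k).
Proof.
  induction k; simpl; intros; [lia|].
  destruct (Nat.eq_dec j k); [subst; left; reflexivity | right; apply IHk; lia].
Qed.

Hypothesis avoid_far : forall L y, span L y -> / 2 <= vnorm (vsub (avoid L) y).

Lemma perturbation_separated j k : (j < k)%nat ->
  / 2 <= vnorm (vsub (vadd (a k) (perturbation k)) (vadd (a j) (perturbation j))).
Proof.
  intro Hjk. rewrite vsub_perturbed. apply avoid_far.
  apply span_sub; [apply span_add|]; apply span_In; apply in_or_app.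
  - left. apply In_pre; lia.
  - right. apply In_chosen; auto.
  - left. apply In_pre; lia.
Qed.
End SeparatedPerturbation.

Lemma separated_perturbation {X : NormedSpace} (a : nat -> X) : infinite_dimensional X ->
  exists e : nat -> X, (forall k, vnorm (e k) <= 1) /\
    forall j k, j <> k -> / 2 <= vnorm (vsub (vadd (a k) (e k)) (vadd (a j) (e j))).
Proof.
  intro Hinf.
  destruct (choice (fun (L : list X) e =>
      vnorm e <= 1 /\ forall y, span L y -> / 2 <= vnorm (vsub e y))
    (fun L => riesz L Hinf)) as [avoid Havoid].
  assert (Hfar : forall L y, span L y -> / 2 <= vnorm (vsub (avoid L) y))
    by (intros L; apply Havoid).
  exists (perturbation avoid a). split; [intro k; apply Havoid|].
  intros j k Hjk. destruct (Nat.lt_gt_cases j k) as [[Hlt|Hgt] _]; auto.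
  - apply perturbation_separated; auto.
  - rewrite vnorm_vsub_sym. apply perturbation_separated; auto.
Qed.

Lemma perturbed_distance {X : NormedSpace} (x y ex ey : X) :
  vnorm ex <= 1 -> vnorm ey <= 1 ->
  vnorm (vsub (vadd x ex) (vadd y ey)) <= vnorm (vsub x y) + 2 /\
  vnorm (vsub x y) <= vnorm (vsub (vadd x ex) (vadd y ey)) + 2.
Proof.
  intros Hx Hy. rewrite vsub_add_add.
  assert (vnorm (vsub ex ey) <= 2).
  { unfold vsub. eapply Rle_trans; [apply vnorm_tri|]. rewrite vnorm_neg. lra. }
  split.
  - eapply Rle_trans; [apply vnorm_tri|]. lra.
  - pose proof (vnorm_tri_rev (vsub x y) (vsub ex ey)). lra.
Qed.

(* A locally finite space is countable: it is the union of the finite balls of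
   radius n around a base point. *)
Lemma enumerate_locally_finite (M : MetricSpace) (x0 : M) :
  locally_finite M -> exists m : nat -> M, forall u, exists k, m k = u.
Proof.
  intro Hlf.
  destruct (choice (fun (n : nat) l => forall y, mdist M x0 y <= INR n -> In y l)
    (fun n => Hlf x0 (INR n))) as [ball Hball].
  exists (fun k => nth (snd (Cantor.of_nat k)) (ball (fst (Cantor.of_nat k))) x0).
  intro u. destruct (INR_unbounded (mdist M x0 u)) as [n Hn].
  destruct (In_nth (ball n) u x0 (Hball n u ltac:(lra))) as (p & _ & Hp).
  exists (Cantor.to_nat (n, p)). rewrite Cantor.cancel_of_to. exact Hp.
Qed.

(* Lower Lipschitz bound from a coarse lower bound a1 d - bb <= q and a
   separation s <= q: small distances use s, large ones the coarse bound. *)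
Lemma lower_lipschitz_bound a1 bb s d q :
  0 < a1 -> 0 < bb -> 0 < s -> 0 <= d -> a1 * d - bb <= q -> s <= q ->
  Rmin (s * a1 / (2 * bb)) (a1 / 2) * d <= q.
Proof.
  intros Ha1 Hbb Hs Hd Hcoarse Hsep.
  destruct (Rle_dec d (2 * bb / a1)) as [Hsmall|Hlarge].
  - apply Rle_trans with (s * a1 / (2 * bb) * d); [apply Rmult_le_compat_r; auto; apply Rmin_l|].
    apply Rle_trans with s; auto.
    apply Rmult_le_compat_l with (r := s * a1 / (2 * bb)) in Hsmall.
    + replace (s * a1 / (2 * bb) * (2 * bb / a1)) with s in Hsmall by (field; lra). lra.
    + apply Rlt_le, Rdiv_lt_0_compat; [apply Rmult_lt_0_compat|]; lra.
  - apply Rle_trans with (a1 / 2 * d); [apply Rmult_le_compat_r; auto; apply Rmin_r|].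
    apply Rnot_le_lt in Hlarge.
    apply Rmult_lt_compat_l with (r := a1) in Hlarge; auto.
    replace (a1 * (2 * bb / a1)) with (2 * bb) in Hlarge by (field; lra). lra.
Qed.

Lemma upper_lipschitz_bound a2 bb eps d q :
  0 <= a2 -> 0 <= bb -> 0 < eps -> eps <= d -> q <= a2 * d + bb ->
  q <= (a2 + bb / eps) * d.
Proof.
  intros Ha2 Hbb Heps Hd Hq.
  assert (bb <= bb / eps * d).
  { unfold Rdiv. rewrite Rmult_assoc. rewrite <- (Rmult_1_r bb) at 1.
    apply Rmult_le_compat_l; auto.
    apply Rmult_le_reg_l with eps; auto. rewrite <- Rmult_assoc, Rinv_r; lra. }
  lra.
Qed.

Lemma perturbation_bilipschitz (M : MetricSpace) (X : NormedSpace) (f g : M -> X) B s :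
  uniformly_discrete M -> quasi_isometric_embedding M X f -> 0 < B -> 0 < s ->
  (forall u v, vdist X (g u) (g v) <= vdist X (f u) (f v) + B /\
               vdist X (f u) (f v) <= vdist X (g u) (g v) + B) ->
  (forall u v, u <> v -> s <= vdist X (g u) (g v)) ->
  bilipschitz_embedding M X g.
Proof.
  intros (eps & Heps & Hud) (a1 & a2 & b & Ha1 & Ha2 & Hb & Hf) HB Hs Hclose Hsep.
  set (c := Rmin (s * a1 / (2 * (b + B))) (a1 / 2)).
  exists c, (Rmax c (a2 + (b + B) / eps)).
  split; [|split; [apply Rmax_l|]].
  { apply Rmin_glb_lt; [|lra].
    apply Rdiv_lt_0_compat; [apply Rmult_lt_0_compat|]; lra. }
  intros u v. destruct (classic (u = v)) as [<-|Huv].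
  { rewrite vdist_vsub, vsub_self, vnorm_0, (proj2 (mdist_eq0 M u u) eq_refl). lra. }
  destruct (Hf u v) as [Hf1 Hf2]. destruct (Hclose u v) as [Hg1 Hg2].
  pose proof (Hud u v Huv). split.
  - apply lower_lipschitz_bound; auto; [lra|apply mdist_nonneg|lra].
  - apply Rle_trans with ((a2 + (b + B) / eps) * mdist M u v).
    + apply upper_lipschitz_bound; lra.
    + apply Rmult_le_compat_r; [apply mdist_nonneg|apply Rmax_r].
Qed.

Theorem lemmaL (M : MetricSpace) (X : NormedSpace) :
  Banach X -> infinite_dimensional X ->
  locally_finite M -> uniformly_discrete M ->
  (exists f : M -> X, quasi_isometric_embedding M X f) ->
  exists g : M -> X, bilipschitz_embedding M X g.
Proof.
  intros _ Hinf Hlf Hud [f Hf].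
  destruct (classic (inhabited M)) as [[x0]|Hempty].
  2:{ exists (fun _ => vzero), 1, 1. split; [lra|split; [lra|]].
      intro u; exfalso; exact (Hempty (inhabits u)). }
  destruct (enumerate_locally_finite M x0 Hlf) as [m Hm].
  destruct (choice _ Hm) as [index Hindex].
  destruct (separated_perturbation (fun k => f (m k)) Hinf) as (e & He & Hsep).
  exists (fun u => vadd (f u) (e (index u))).
  apply (perturbation_bilipschitz M X f _ 2 (/ 2) Hud Hf); [lra|lra| |].
  - intros u v. rewrite !vdist_vsub. apply perturbed_distance; auto.
  - intros u v Huv. rewrite vdist_vsub.
    assert (Hidx : index v <> index u).
    { intro E. apply Huv. rewrite <- (Hindex u), <- E. apply Hindex. }
    pose proof (Hsep _ _ Hidx) as Hfar. rewrite !Hindex in Hfar. exact Hfar.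
Qed.
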